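(* Let $S=K[x_1,\dots,x_n]$ with $K$ an $F$-finite field of prime characteristic $p$, $I\subseteq S$ a squarefree monomial ideal, and $R=S/I$. If $J$ is a monomial ideal of $R$ and $e\in\mathbb N$, then $J_e$ and $\mathcal P(J)$ are monomial ideals of $R$.
   Context: A monomial ideal of $R$ is one generated by images of monomials. $J_e=\{f\in R\mid \varphi(f^{1/p^e})\in J \text{ for all }\varphi\in\operatorname{Hom}_R(R^{1/p^e},R)\}$ and $\mathcal P(J)=\bigcap_{s\in\mathbb N}J_s$ (Cartier core). *)

From HB Require Import structures.
From mathcomp Require Import all_boot all_order all_algebra.
From mathcomp Require Import mpoly.
Set Implicit Arguments. Unset Strict Implicit. Unset Printing Implicit Defensive.
Import Order.TTheory GRing.Theory.
Local Open Scope ring_scope.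

Definition is_ideal (R : comPzRingType) (J : R -> Prop) : Prop :=
  [/\ J 0, (forall a b, J a -> J b -> J (a + b)) & (forall r a, J a -> J (r * a))].

Definition ideal_gen (R : comPzRingType) (G : R -> Prop) : R -> Prop :=
  fun f => exists (k : nat) (r g : 'I_k -> R),
    (forall i, G (g i)) /\ f = \sum_(i < k) r i * g i.

(* K is F-finite (of characteristic p): K is a finitely generated module over K^p,
   i.e. there are b_1..b_k with every x = sum c_i^p b_i. *)
Definition F_finite (K : fieldType) (p : nat) : Prop :=
  exists (k : nat) (b : 'I_k -> K), forall x : K,
    exists c : 'I_k -> K, x = \sum_(i < k) (c i) ^+ p * b i.

Definition squarefree_mon (n : nat) (m : 'X_{1..n}) : Prop := forall i, (m i <= 1)%N.

Definition squarefree_monomial_ideal (K : fieldType) (n : nat)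
    (I : {mpoly K[n]} -> Prop) : Prop :=
  exists M : 'X_{1..n} -> Prop, (forall m, M m -> squarefree_mon m) /\
    forall f, I f <-> ideal_gen (fun g => exists m, M m /\ g = 'X_[m]) f.

Definition monomial_ideal_of (K : fieldType) (n : nat) (R : comPzRingType)
    (pi : {mpoly K[n]} -> R) (J : R -> Prop) : Prop :=
  exists M : 'X_{1..n} -> Prop,
    forall f, J f <-> ideal_gen (fun g => exists m, M m /\ g = pi 'X_[m]) f.

(* phi is an element of Hom_R(R^{1/p^e}, R): an additive map R -> R (R^{1/p^e}
   identified with R) with phi (r^{p^e} s) = r phi(s), i.e. R-linear for the
   Frobenius-twisted module structure. *)
Definition p_e_linear (R : comPzRingType) (p e : nat) (phi : R -> R) : Prop :=
  (forall a b, phi (a + b) = phi a + phi b) /\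
  (forall r s, phi (r ^+ (p ^ e) * s) = r * phi s).

Definition J_e (R : comPzRingType) (p : nat) (J : R -> Prop) (e : nat) : R -> Prop :=
  fun f => forall phi : R -> R, p_e_linear p e phi -> J (phi f).

Definition cartier_core (R : comPzRingType) (p : nat) (J : R -> Prop) : R -> Prop :=
  fun f => forall s : nat, J_e p J s f.

(* The quotient R = S/I by a monomial ideal inherits the N^n-grading of S, and an
   ideal of R is monomial exactly when it contains the homogeneous components of
   its elements (nonzero coefficients in K being units).  J_e is an ideal, so it
   remains to see that it is closed under taking components.  If phi is
   p^e-linear and x lies in J_e, the degree-b component of phi(x_a) coincides
   with the degree-b component of psi(x), where psi is the homogeneous piece of
   phi of degree b - a/p^e; psi is again p^e-linear, so psi(x) lies in the
   monomial ideal J together with its components.  Hence every component of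
   phi(x_a), and thus phi(x_a) itself, lies in J.  The Cartier core is an
   intersection of such ideals. *)

From HB Require Import structures.
From mathcomp Require Import all_boot all_order all_algebra.
From mathcomp Require Import mpoly.
From Stdlib Require Import ClassicalEpsilon.
From mathcomp Require Import zify.
Set Implicit Arguments. Unset Strict Implicit. Unset Printing Implicit Defensive.
Import GRing.Theory.
Local Open Scope ring_scope.

Section IdealGen.
Variables (A : comPzRingType) (G : A -> Prop).

Lemma ideal_gen0 : ideal_gen G 0.
Proof. by exists 0%N, (fun _ => 0), (fun _ => 0); split=> [[]|]; rewrite ?big_ord0. Qed.

Lemma ideal_genD x y : ideal_gen G x -> ideal_gen G y -> ideal_gen G (x + y).
Proof.
move=> [k1 [r1 [g1 [G1 ->]]]] [k2 [r2 [g2 [G2 ->]]]].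
pose glue T (f1 : 'I_k1 -> T) (f2 : 'I_k2 -> T) i :=
  match split i with inl j => f1 j | inr j => f2 j end.
exists (k1 + k2)%N, (glue _ r1 r2), (glue _ g1 g2); split.
  by move=> i; rewrite /glue; case: (split i).
by rewrite big_split_ord /glue; congr (_ + _); apply: eq_bigr => i _;
  rewrite ?(unsplitK (inl _ : 'I_k1 + 'I_k2)) ?(unsplitK (inr _ : 'I_k1 + 'I_k2)).
Qed.

Lemma ideal_gen_sum (I : Type) (s : seq I) (P : pred I) (F : I -> A) :
  (forall i, P i -> ideal_gen G (F i)) -> ideal_gen G (\sum_(i <- s | P i) F i).
Proof. by move=> FG; apply: big_ind => //; [exact: ideal_gen0 | exact: ideal_genD]. Qed.

Lemma ideal_genMg r g : G g -> ideal_gen G (r * g).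
Proof. by move=> Gg; exists 1%N, (fun _ => r), (fun _ => g); rewrite big_ord1. Qed.

Lemma ideal_gen_ind (L : A -> Prop) : L 0 -> (forall x y, L x -> L y -> L (x + y)) ->
  (forall r g, G g -> L (r * g)) -> forall x, ideal_gen G x -> L x.
Proof. by move=> L0 LD LG x [k [r [g [Gg ->]]]]; apply: big_ind => // i _; apply: LG. Qed.

Lemma ideal_genM r x : ideal_gen G x -> ideal_gen G (r * x).
Proof.
elim/ideal_gen_ind => [|x1 x2 I1 I2|s g Gg]; first by rewrite mulr0; exact: ideal_gen0.
  by rewrite mulrDr; exact: ideal_genD.
by rewrite mulrA; exact: ideal_genMg.
Qed.

End IdealGen.

Section FrobeniusIdeals.
Variables (A : comPzRingType) (p : nat) (J : A -> Prop).
Hypothesis J_ideal : is_ideal J.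

Lemma p_e_linear0 e (phi : A -> A) : p_e_linear p e phi -> phi 0 = 0.
Proof. by case=> phiD _; apply: (addrI (phi 0)); rewrite -phiD !addr0. Qed.

Lemma J_e_ideal e : is_ideal (J_e p J e).
Proof.
have [J0 JD _] := J_ideal; split.
- by move=> phi phi_lin; rewrite (p_e_linear0 phi_lin).
- by move=> x y Jx Jy phi phi_lin; rewrite phi_lin.1; apply: JD; [apply: Jx | apply: Jy].
move=> r x Jx phi [phiD phiL]; apply: (Jx (fun s => phi (r * s))).
by split=> u v; rewrite ?mulrDr ?phiD // mulrCA phiL.
Qed.

Lemma cartier_core_ideal : is_ideal (cartier_core p J).
Proof.
split=> [s|x y Px Py s|r x Px s]; have [J0 JD JM] := J_e_ideal s;
  [exact: J0 | exact: JD | exact: JM].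
Qed.

End FrobeniusIdeals.

Section MonomialProjection.
Variables (K : fieldType) (n : nat).
Implicit Types (g : {mpoly K[n]}) (a m : 'X_{1..n}).

Definition mproj a g : {mpoly K[n]} := g@_a *: 'X_[a].

Fact mproj_is_linear a : linear (mproj a).
Proof. by move=> c g h; rewrite /mproj mcoeffD mcoeffZ scalerDl scalerA. Qed.

HB.instance Definition _ a :=
  GRing.isLinear.Build K {mpoly K[n]} {mpoly K[n]} _ (mproj a) (mproj_is_linear a).

Lemma mcoeffMXE g m a :
  (g * 'X_[m])@_a = if (m <= a)%MM then g@_(a - m)%MM else 0.
Proof.
case: ifP => le_ma; first by rewrite -[RHS](mcoeffMX g m) addmC submK.
apply/eqP; rewrite mcoeff_eq0 (perm_mem (msuppMX g m)); apply/mapP => -[m' _ am].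
by rewrite am lem_addr in le_ma.
Qed.

Lemma mprojMX a g m :
  mproj a (g * 'X_[m]) = if (m <= a)%MM then mproj (a - m)%MM g * 'X_[m] else 0.
Proof.
rewrite /mproj mcoeffMXE; case: ifP => le_ma; last by rewrite scale0r.
by rewrite -scalerAl -mpolyXD submK.
Qed.

Lemma mprojMZX a g c m :
  mproj a (g * (c *: 'X_[m])) =
  if (m <= a)%MM then mproj (a - m)%MM g * (c *: 'X_[m]) else 0.
Proof. by rewrite -scalerAr linearZ /= mprojMX; case: ifP; rewrite ?scalerAr ?scaler0. Qed.

Lemma mproj_mproj a b g : mproj a (mproj b g) = if a == b then mproj b g else 0.
Proof.
rewrite linearZ /= /mproj mcoeffX.
by have [->|_] := eqVneq a b; rewrite ?scale1r ?scale0r ?scaler0.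
Qed.

Lemma mproj_msupp a g : mproj a g != 0 -> a \in msupp g.
Proof.
by rewrite mcoeff_msupp; apply: contraNneq => coef0; rewrite /mproj coef0 scale0r.
Qed.

Lemma mproj_monomial_ideal (M : 'X_{1..n} -> Prop) a g :
  ideal_gen (fun h => exists m, M m /\ h = 'X_[m]) g ->
  ideal_gen (fun h => exists m, M m /\ h = 'X_[m]) (mproj a g).
Proof.
elim/ideal_gen_ind => [|x y Ix Iy|r _ [m [Mm ->]]].
- by rewrite linear0; exact: ideal_gen0.
- by rewrite linearD; exact: ideal_genD.
by rewrite mprojMX; case: ifP => _; [apply: ideal_genMg; exists m | exact: ideal_gen0].
Qed.

End MonomialProjection.

Section GradedQuotient.
Variables (K : fieldType) (n : nat) (R : comPzRingType).
Variable pi : {rmorphism {mpoly K[n]} -> R}.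
Hypothesis pi_surj : forall r, exists g, pi g = r.
Hypothesis ker_mproj : forall a g, pi g = 0 -> pi (mproj a g) = 0.
Implicit Types (r s : R) (a m : 'X_{1..n}).

Definition rep r := proj1_sig (constructive_indefinite_description _ (pi_surj r)).

Lemma repK r : pi (rep r) = r.
Proof. exact: proj2_sig (constructive_indefinite_description _ (pi_surj r)). Qed.

Definition hcomp a r := pi (mproj a (rep r)).

Lemma hcomp_pi a g : hcomp a (pi g) = pi (mproj a g).
Proof.
apply/eqP; rewrite -subr_eq0 -!rmorphB -linearB; apply/eqP/ker_mproj.
by rewrite rmorphB repK subrr.
Qed.

Fact hcomp_is_zmod_morphism a : zmod_morphism (hcomp a).
Proof. by move=> r s; rewrite -[r]repK -[s]repK -rmorphB !hcomp_pi linearB rmorphB. Qed.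

HB.instance Definition _ a :=
  GRing.isZmodMorphism.Build R R (hcomp a) (hcomp_is_zmod_morphism a).

Lemma hcompMX a r m :
  hcomp a (r * pi 'X_[m]) = if (m <= a)%MM then hcomp (a - m)%MM r * pi 'X_[m] else 0.
Proof.
rewrite -[r]repK -rmorphM hcomp_pi mprojMX.
by case: ifP => _; rewrite ?rmorph0 // rmorphM hcomp_pi.
Qed.

Lemma hcompMZX a r c m :
  hcomp a (r * pi (c *: 'X_[m])) =
  if (m <= a)%MM then hcomp (a - m)%MM r * pi (c *: 'X_[m]) else 0.
Proof.
rewrite -[r]repK -rmorphM hcomp_pi mprojMZX.
by case: ifP => _; rewrite ?rmorph0 // rmorphM hcomp_pi.
Qed.

Lemma hcomp_hcomp a b r : hcomp a (hcomp b r) = if a == b then hcomp b r else 0.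
Proof. by rewrite [hcomp b r]/hcomp hcomp_pi mproj_mproj; case: eqP; rewrite ?rmorph0. Qed.

Lemma sum_hcomp r : r = \sum_(a <- msupp (rep r)) hcomp a r.
Proof. by rewrite -{1}[r]repK {1}(mpolyE (rep r)) rmorph_sum. Qed.

Lemma eq_hcomp r s : (forall a, hcomp a r = hcomp a s) -> r = s.
Proof.
move=> eq_rs; apply/eqP; rewrite -subr_eq0 (sum_hcomp (r - s)).
by rewrite big1 // => a _; rewrite raddfB /= eq_rs subrr.
Qed.

Lemma hcomp_msupp a r : hcomp a r != 0 -> a \in msupp (rep r).
Proof.
by move=> nz; apply: mproj_msupp; apply: contraNneq nz; rewrite /hcomp => ->; rewrite rmorph0.
Qed.

Lemma hcompE a r : hcomp a r = pi ((rep r)@_a)%:MP * pi 'X_[a].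
Proof. by rewrite /hcomp /mproj -mul_mpolyC rmorphM. Qed.

Lemma exists_hcomp (F : 'X_{1..n} -> R) (T : seq 'X_{1..n}) :
  (forall b, b \notin T -> F b = 0) ->
  (forall a b, hcomp a (F b) = if a == b then F b else 0) ->
  exists r, forall b, hcomp b r = F b.
Proof.
move=> F_supp F_homog; exists (\sum_(b <- undup T) F b) => b.
rewrite raddf_sum /=; under eq_bigr do rewrite F_homog.
have [bT|bT] := boolP (b \in T); last first.
  by rewrite F_supp // big1 // => c _; case: eqP => // <-; exact: F_supp.
rewrite (bigD1_seq b) ?mem_undup ?undup_uniq //= eqxx big1 ?addr0 // => c.
by rewrite eq_sym => /negPf ->.
Qed.

Section HomogeneousPart.
Variables (p e : nat) (phi : R -> R).
Hypothesis pcharK : p \in [pchar K].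
Hypothesis phi_lin : p_e_linear p e phi.
Variables a b : 'X_{1..n}.
Implicit Types (c d : 'X_{1..n}).

Local Notation q := (p ^ e)%N.

Let q_gt0 : (0 < q)%N.
Proof. by rewrite expn_gt0 prime_gt0 // (pcharf_prime pcharK). Qed.

Let phi0 : phi 0 = 0. Proof. exact: p_e_linear0 phi_lin. Qed.

Definition hpart_admissible d := (b *+ q <= a + d *+ q)%MM.
Definition hpart_source d := (a + d *+ q - b *+ q)%MM.

Definition hpart_target c := [multinom ((c i + b i * q - a i) %/ q)%N | i < n].

(* [hpart] is the homogeneous component of [phi] of degree [b - a/q] for the
   N^n-grading of R: it sends the degree-c part of [s] to degree [(c + bq - a)/q],
   so the degree-b part of [hpart s] is that of [phi] applied to the degree-a part. *)
Definition hpart_comp s d :=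
  if hpart_admissible d then hcomp d (phi (hcomp (hpart_source d) s)) else 0.

Lemma hpart_comp_supp s d :
  d \notin map hpart_target (msupp (rep s)) -> hpart_comp s d = 0.
Proof.
apply: contraNeq; rewrite /hpart_comp; case: ifP => [adm|_]; last by rewrite eqxx.
have [->|nz] := eqVneq (hcomp (hpart_source d) s) 0; first by rewrite phi0 raddf0 eqxx.
move=> _; apply/mapP; exists (hpart_source d); first exact: hcomp_msupp nz.
apply/mnmP => i; rewrite mnmE /hpart_target /hpart_source mnmBE mnmDE !mulmnE.
have := mnm_lepP adm i; rewrite mnmDE !mulmnE => adm_i.
have -> : (a i + d i * q - b i * q + b i * q - a i = d i * q)%N by lia.
by rewrite mulnK.
Qed.

Lemma hcomp_hpart_comp s c d :
  hcomp c (hpart_comp s d) = if c == d then hpart_comp s d else 0.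
Proof.
rewrite /hpart_comp; case: ifP => _; first exact: hcomp_hcomp.
by rewrite raddf0; case: (c == d).
Qed.

Definition hpart s := proj1_sig (constructive_indefinite_description _
  (exists_hcomp (@hpart_comp_supp s) (@hcomp_hpart_comp s))).

Lemma hcomp_hpart s d : hcomp d (hpart s) = hpart_comp s d.
Proof. by rewrite /hpart; case: constructive_indefinite_description. Qed.

Lemma hpartD s t : hpart (s + t) = hpart s + hpart t.
Proof.
apply: eq_hcomp => d; rewrite raddfD /= !hcomp_hpart /hpart_comp.
by case: ifP => _; rewrite ?addr0 // !raddfD /= phi_lin.1 raddfD.
Qed.

Lemma hpart0 : hpart 0 = 0.
Proof. by apply: (addrI (hpart 0)); rewrite -hpartD !addr0. Qed.

Lemma hpart_shift m d : (m <= d)%MM ->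
  (hpart_admissible d && (m *+ q <= hpart_source d)%MM) = hpart_admissible (d - m)%MM /\
  (hpart_source d - m *+ q)%MM = hpart_source (d - m)%MM.
Proof.
move=> /mnm_lepP le_md; rewrite /hpart_admissible /hpart_source; split.
  apply/andP/mnm_lepP => [[/mnm_lepP h1 /mnm_lepP h2] i | h].
    have := h1 i; have := h2 i; have := le_md i; have := leq_mul (le_md i) (leqnn q).
    rewrite !(mnmBE, mnmDE, mulmnE) mulnBl; lia.
  split; apply/mnm_lepP => i; have := h i; have := le_md i;
    have := leq_mul (le_md i) (leqnn q);
    rewrite !(mnmBE, mnmDE, mulmnE) ?mulnBl; lia.
apply/mnmP => i; have := le_md i; have := leq_mul (le_md i) (leqnn q).
rewrite !(mnmBE, mnmDE, mulmnE) mulnBl; lia.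
Qed.

Lemma hpart_termM s (k : K) m :
  hpart ((pi (k *: 'X_[m])) ^+ q * s) = pi (k *: 'X_[m]) * hpart s.
Proof.
have Xq : pi (k *: 'X_[m]) ^+ q = pi (k ^+ q *: 'X_[m *+ q]).
  by rewrite -rmorphXn exprZn mpolyXn.
have phiX t : phi (t * pi (k ^+ q *: 'X_[m *+ q])) = phi t * pi (k *: 'X_[m]).
  by rewrite mulrC -Xq phi_lin.2 mulrC.
apply: eq_hcomp => d; rewrite hcomp_hpart /hpart_comp [in RHS]mulrC hcompMZX.
rewrite Xq (mulrC _ s) hcompMZX.
case le_md: (m <= d)%MM; last first.
  case: (hpart_admissible d) => //; case: (m *+ q <= _)%MM; last by rewrite phi0 raddf0.
  by rewrite phiX hcompMZX le_md.
rewrite hcomp_hpart /hpart_comp; have [<- <-] := hpart_shift le_md.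
case: (hpart_admissible d) => /=; last by rewrite mul0r.
case: (m *+ q <= hpart_source d)%MM; last by rewrite phi0 raddf0 mul0r.
by rewrite phiX hcompMZX le_md.
Qed.

Lemma hpart_p_e_linear : p_e_linear p e hpart.
Proof.
split=> [|r s]; first exact: hpartD.
have qchar : [pchar {mpoly K[n]}].-nat q.
  by rewrite (eq_pnat _ (pchar_lalg _)) pnatX pnatE ?(pcharf_prime pcharK) ?pcharK ?orbT.
rewrite -[r]repK (mpolyE (rep r)).
elim/big_ind: _ => [|x y IHx IHy|m _]; last exact: hpart_termM.
  by rewrite rmorph0 expr0n /= eqn0Ngt q_gt0 !mul0r hpart0.
by rewrite -rmorphXn exprDn_pchar // rmorphD !rmorphXn mulrDl hpartD IHx IHy rmorphD mulrDl.
Qed.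

Lemma hcomp_hpart_diag s : hcomp b (hpart s) = hcomp b (phi (hcomp a s)).
Proof.
rewrite hcomp_hpart /hpart_comp /hpart_admissible /hpart_source lem_addl.
congr (hcomp _ (phi (hcomp _ _))).
by apply/mnmP => i; rewrite !(mnmBE, mnmDE, mulmnE) addnK.
Qed.

End HomogeneousPart.

Lemma ideal_from_hcomp (L : R -> Prop) r :
  is_ideal L -> (forall a, L (hcomp a r)) -> L r.
Proof. by case=> L0 LD _ Lr; rewrite (sum_hcomp r); elim/big_ind: _ => // a _. Qed.

Lemma hcomp_closed_monomial_ideal (L : R -> Prop) :
  is_ideal L -> (forall a r, L r -> L (hcomp a r)) -> monomial_ideal_of pi L.
Proof.
move=> L_ideal L_hcomp; have [L0 LD LM] := L_ideal.
exists (fun m => L (pi 'X_[m])) => r; split=> [Lr|]; last first.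
  by elim/ideal_gen_ind => // s _ [m [Lm ->]]; apply: LM.
rewrite (sum_hcomp r); apply: ideal_gen_sum => a _; rewrite hcompE.
have [->|nz] := eqVneq (rep r)@_a 0.
  by rewrite mpolyC0 rmorph0 mul0r; exact: ideal_gen0.
apply: ideal_genMg; exists a; split=> //.
have := LM (pi ((rep r)@_a)^-1%:MP) _ (L_hcomp a _ Lr).
by rewrite hcompE mulrA -rmorphM -mpolyCM mulVf // mpolyC1 rmorph1 mul1r.
Qed.

Lemma monomial_ideal_is_ideal J : monomial_ideal_of pi J -> is_ideal J.
Proof.
case=> M J_gen; split=> [|x y|r x]; rewrite !J_gen;
  [exact: ideal_gen0 | exact: ideal_genD | exact: ideal_genM].
Qed.

Lemma monomial_ideal_hcomp J a r : monomial_ideal_of pi J -> J r -> J (hcomp a r).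
Proof.
case=> M J_gen; rewrite !J_gen; elim/ideal_gen_ind => [|x y Jx Jy|s _ [m [Mm ->]]].
- by rewrite raddf0; exact: ideal_gen0.
- by rewrite raddfD; exact: ideal_genD.
by rewrite hcompMX; case: ifP => _; [apply: ideal_genMg; exists m | exact: ideal_gen0].
Qed.

Lemma J_e_hcomp p e J a r : p \in [pchar K] -> monomial_ideal_of pi J ->
  J_e p J e r -> J_e p J e (hcomp a r).
Proof.
move=> pcharK J_mon Jr phi phi_lin.
apply: (ideal_from_hcomp (monomial_ideal_is_ideal J_mon)) => b.
rewrite -(hcomp_hpart_diag pcharK phi_lin).
by apply: monomial_ideal_hcomp J_mon _; apply: Jr; exact: hpart_p_e_linear.
Qed.

End GradedQuotient.

Theorem mainTheorem10 (p : nat) (K : fieldType) (n : nat)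
  (hp : prime p) (hchar : p \in [pchar K]) (hF : F_finite K p)
  (I : {mpoly K[n]} -> Prop) (hI : squarefree_monomial_ideal I)
  (R : comPzRingType) (pi : {rmorphism {mpoly K[n]} -> R})
  (hsurj : forall r : R, exists f, pi f = r)
  (hker : forall f, pi f = 0 <-> I f)
  (J : R -> Prop) (hJ : monomial_ideal_of pi J) :
  (forall e : nat, monomial_ideal_of pi (J_e p J e)) /\
  monomial_ideal_of pi (cartier_core p J).
Proof.
have ker_mproj a g : pi g = 0 -> pi (mproj a g) = 0.
  by have [M [_ I_gen]] := hI; rewrite !hker !I_gen; exact: mproj_monomial_ideal.
have J_ideal := monomial_ideal_is_ideal hJ.
have Je_hcomp e a := J_e_hcomp hsurj ker_mproj a (e := e) hchar hJ.
split=> [e|]; apply: (hcomp_closed_monomial_ideal (pi_surj := hsurj)).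
- exact: J_e_ideal J_ideal e.
- by move=> a r; exact: Je_hcomp.
- exact: cartier_core_ideal J_ideal.
- by move=> a r Pr s; exact: Je_hcomp (Pr s).
Qed.
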